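(* Let $\mathcal{P}_1,\mathcal{P}_2$ be finite posets. If $\mathbf{T}\in\mathcal{N}_{<\infty}$ is a matrix of rank two, then $\mathbf{T}$ has ND rank two.
   Context: For a finite poset $\mathcal{Q}$, the order cone $\mathcal{C}(\mathcal{Q})$ is the set of $\mathbf{f}\in\mathbb{R}^{\mathcal{Q}}$ with $f_x\ge0$ for all $x$ and $f_x\le f_y$ whenever $x\preceq y$. $\mathcal{N}_{<\infty}$ is the set of matrices in $\mathbb{R}^{\mathcal{P}_1\times\mathcal{P}_2}$ of the form $\sum_{i=1}^r\mathbf{a}_i\mathbf{b}_i^\intercal$ for some finite $r$ with $\mathbf{a}_i\in\mathcal{C}(\mathcal{P}_1)$, $\mathbf{b}_i\in\mathcal{C}(\mathcal{P}_2)$; the ND rank is the minimal such $r$. Rank means ordinary real matrix rank. *)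

From HB Require Import structures.
From mathcomp Require Import all_boot all_order all_algebra.
From mathcomp Require Import reals.
Set Implicit Arguments. Unset Strict Implicit. Unset Printing Implicit Defensive.
Import Order.TTheory GRing.Theory Num.Theory.
Local Open Scope ring_scope.

Definition order_cone (R : realType) (d : Order.disp_t) (Q : finPOrderType d)
  (f : Q -> R) : Prop :=
  (forall x, 0 <= f x) /\ (forall x y : Q, (x <= y)%O -> f x <= f y).

Definition nd_decomp (R : realType) (d1 d2 : Order.disp_t)
  (P1 : finPOrderType d1) (P2 : finPOrderType d2) (T : P1 -> P2 -> R) (r : nat) : Prop :=
  exists (a : 'I_r -> P1 -> R) (b : 'I_r -> P2 -> R),
    (forall i, order_cone (a i)) /\ (forall i, order_cone (b i)) /\
    (forall x y, T x y = \sum_(i < r) a i x * b i y).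

Definition in_Nfin (R : realType) (d1 d2 : Order.disp_t)
  (P1 : finPOrderType d1) (P2 : finPOrderType d2) (T : P1 -> P2 -> R) : Prop :=
  exists r, nd_decomp T r.

Definition nd_rank_eq (R : realType) (d1 d2 : Order.disp_t)
  (P1 : finPOrderType d1) (P2 : finPOrderType d2) (T : P1 -> P2 -> R) (r : nat) : Prop :=
  nd_decomp T r /\ (forall r', nd_decomp T r' -> (r <= r')%N).

Definition mx_of (R : realType) (d1 d2 : Order.disp_t)
  (P1 : finPOrderType d1) (P2 : finPOrderType d2) (T : P1 -> P2 -> R)
  : 'M[R]_(#|P1|, #|P2|) :=
  \matrix_(i, j) T (enum_val i) (enum_val j).

(* Write T = a0 b0^T + a1 b1^T with a0, a1 and b0, b1 linearly independent.
   Because T is a finite sum of products of order-cone vectors, every column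
   T(., y) and every increment T(., y') - T(., y) with y <= y' lies in C(P1).
   Their coordinates in the basis a0, a1 form a finite family of plane vectors,
   all lying in the open half-plane where the functional "sum over P1" is
   positive.  The two members u, v of extreme slope span a cone containing the
   whole family, and they are independent because b0, b1 are.  By Cramer's rule
   each column is al(y) u + be(y) v with al, be >= 0, and since increments are
   also nonnegative combinations of u, v, the coefficients al, be are monotone.
   Hence T = U al^T + V be^T with U, V, al, be in the order cones; the matching
   lower bound is rank <= ND rank. *)

From HB Require Import structures.
From mathcomp Require Import all_boot all_order all_algebra.
From mathcomp Require Import reals.
From mathcomp Require Import ring.
Set Implicit Arguments. Unset Strict Implicit. Unset Printing Implicit Defensive.
Import Order.TTheory GRing.Theory Num.Theory.
Local Open Scope ring_scope.

Lemma sum_ord2 (V : nmodType) (F : 'I_2 -> V) : \sum_(k < 2) F k = F 0 + F 1.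
Proof. by rewrite big_ord_recl big_ord1; congr (_ + F _); apply: val_inj. Qed.

Section Plane.
Variable R : realFieldType.
Implicit Types c e s : R * R.

Definition cross c e := c.1 * e.2 - c.2 * e.1.
Definition dot c e := c.1 * e.1 + c.2 * e.2.
Definition slope s c := cross s c / dot s c.

Lemma cross0l e : cross 0 e = 0.
Proof. by rewrite /cross /= !mul0r subrr. Qed.

Lemma cross0r c : cross c 0 = 0.
Proof. by rewrite /cross /= !mulr0 subrr. Qed.

Lemma crossBl c c' e : cross (c - c') e = cross c e - cross c' e.
Proof. by rewrite /cross /=; ring. Qed.

Lemma crossBr c e e' : cross c (e - e') = cross c e - cross c e'.
Proof. by rewrite /cross /=; ring. Qed.

Lemma dot_self_gt0 s c : 0 < dot s c -> 0 < dot s s.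
Proof.
move=> sc_gt0; rewrite lt_def addr_ge0 ?sqr_ge0 // andbT paddr_eq0 ?sqr_ge0 //.
apply: contraTN sc_gt0 => /andP[]; rewrite !sqrf_eq0 => /eqP s1 /eqP s2.
by rewrite /dot s1 s2 !mul0r addr0 ltxx.
Qed.

Lemma cross_slope s c e : 0 < dot s c -> 0 < dot s e ->
  cross c e = (slope s e - slope s c) * (dot s c * dot s e) / dot s s.
Proof.
move=> sc_gt0 se_gt0; have ss_gt0 := dot_self_gt0 sc_gt0.
move: s c e sc_gt0 se_gt0 ss_gt0 => [s1 s2] [c1 c2] [e1 e2].
rewrite /slope /cross /dot /= => sc_gt0 se_gt0 ss_gt0.
by field; rewrite !gt_eqF.
Qed.

Lemma cross_ge0_slope s c e : 0 < dot s c -> 0 < dot s e ->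
  (0 <= cross c e) = (slope s c <= slope s e).
Proof.
move=> sc_gt0 se_gt0; have ss_gt0 := dot_self_gt0 sc_gt0.
by rewrite (cross_slope sc_gt0 se_gt0) -mulrA pmulr_lge0 ?subr_ge0 ?divr_gt0 ?mulr_gt0.
Qed.

Lemma cross_eq0_slope s c e : 0 < dot s c -> 0 < dot s e ->
  (cross c e == 0) = (slope s c == slope s e).
Proof.
move=> sc_gt0 se_gt0; have ss_gt0 := dot_self_gt0 sc_gt0.
rewrite (cross_slope sc_gt0 se_gt0) !mulf_eq0 invr_eq0.
by rewrite (gt_eqF sc_gt0) (gt_eqF se_gt0) (gt_eqF ss_gt0) !orbF subr_eq0 eq_sym.
Qed.

Lemma extreme_rays (I : finType) (w : I -> R * R) s i0 :
  w i0 != 0 -> (forall i, w i != 0 -> 0 < dot s (w i)) ->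
  exists iu iv, [/\ w iu != 0, forall i, 0 <= cross (w iv) (w i),
    forall i, 0 <= cross (w i) (w iu) &
    cross (w iv) (w iu) = 0 -> forall i, cross (w iu) (w i) = 0].
Proof.
move=> nz0 w_pos.
have [iu nzu u_max] := @arg_maxP _ R I i0 (fun i => w i != 0) (slope s \o w) nz0.
have [iv nzv v_min] := @arg_minP _ R I i0 (fun i => w i != 0) (slope s \o w) nz0.
exists iu, iv; split=> // [i|i|/eqP].
- have [->|nzi] := eqVneq (w i) 0; first by rewrite cross0r.
  by rewrite (cross_ge0_slope (w_pos _ nzv) (w_pos _ nzi)); exact: v_min.
- have [->|nzi] := eqVneq (w i) 0; first by rewrite cross0l.
  by rewrite (cross_ge0_slope (w_pos _ nzi) (w_pos _ nzu)); exact: u_max.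
rewrite (cross_eq0_slope (w_pos _ nzv) (w_pos _ nzu)) => /eqP uv_eq i.
have [->|nzi] := eqVneq (w i) 0; first by rewrite cross0r.
apply/eqP; rewrite (cross_eq0_slope (w_pos _ nzu) (w_pos _ nzi)).
have /= := v_min _ nzi; have /= := u_max _ nzi; rewrite uv_eq => le_u ge_u.
by rewrite eq_le le_u ge_u.
Qed.

End Plane.

Section Comb2.
Variables (R : realFieldType) (X : finType).
Implicit Types (f g : X -> R) (c e : R * R).

Definition comb2 f g c x := c.1 * f x + c.2 * g x.

Definition free2 f g := forall c, (forall x, comb2 f g c x = 0) -> c = 0.

Lemma comb2B f g c e x : comb2 f g (c - e) x = comb2 f g c x - comb2 f g e x.
Proof. by rewrite /comb2 /=; ring. Qed.

Lemma comb2_cramer f g u v w x : cross v u != 0 ->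
  comb2 f g w x =
  cross v w / cross v u * comb2 f g u x + cross w u / cross v u * comb2 f g v x.
Proof.
move: u v w => [u1 u2] [v1 v2] [w1 w2]; rewrite /comb2 /cross /= => D_neq0.
by field.
Qed.

Lemma free2_dot_sum_gt0 f g c : free2 f g ->
  (forall x, 0 <= comb2 f g c x) -> c != 0 -> 0 < dot (\sum_x f x, \sum_x g x) c.
Proof.
move=> free_fg comb_ge0 c_neq0.
have -> : dot (\sum_x f x, \sum_x g x) c = \sum_x comb2 f g c x.
  rewrite /dot /= !mulr_suml -big_split; apply: eq_bigr => x _.
  by rewrite /comb2 mulrC [_ * c.2]mulrC.
rewrite lt_def sumr_ge0 // andbT; apply: contra c_neq0 => /eqP sum0.
by apply/eqP/free_fg => x; apply: (psumr_eq0P (fun x _ => comb_ge0 x) sum0).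
Qed.

Lemma free2_row_free (B : 'M[R]_(2, #|X|)) :
  row_free B -> free2 (fun x => B 0 (enum_rank x)) (fun x => B 1 (enum_rank x)).
Proof.
move=> freeB [c1 c2] comb0.
pose r : 'rV[R]_2 := \row_k (if val k == 0%N then c1 else c2).
have : r *m B == 0.
  apply/eqP/matrixP => i j; rewrite !mxE sum_ord2 !mxE /=.
  by have := comb0 (enum_val j); rewrite /comb2 enum_valK.
rewrite mulmx_free_eq0 // => /eqP /matrixP r0.
by have := r0 0 0; have := r0 0 1; rewrite !mxE /= => -> ->.
Qed.

End Comb2.

Section OrderCone.
Variables (R : realType) (d : Order.disp_t) (Q : finPOrderType d).
Implicit Types f g : Q -> R.

Lemma eq_order_cone f g : f =1 g -> order_cone f -> order_cone g.
Proof.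
by move=> fg [f_ge0 f_mono]; split=> [x|x y le_xy]; rewrite -!fg ?f_ge0 ?f_mono.
Qed.

Lemma order_cone_sum (r : nat) (a : 'I_r -> Q -> R) (c : 'I_r -> R) :
  (forall i, order_cone (a i)) -> (forall i, 0 <= c i) ->
  order_cone (fun x => \sum_(i < r) a i x * c i).
Proof.
move=> a_cone c_ge0; split=> [x|x y le_xy].
  by apply: sumr_ge0 => i _; apply: mulr_ge0 => //; case: (a_cone i).
by apply: ler_sum => i _; apply: ler_wpM2r => //; case: (a_cone i) => _; apply.
Qed.

End OrderCone.

Section NdDecomp.
Variables (R : realType) (d1 d2 : Order.disp_t).
Variables (P1 : finPOrderType d1) (P2 : finPOrderType d2).
Implicit Types T : P1 -> P2 -> R.

Lemma nd_decomp_col T r y : nd_decomp T r -> order_cone (T^~ y).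
Proof.
move=> [a [b [a_cone [b_cone T_eq]]]].
apply: (@eq_order_cone _ _ _ (fun x => \sum_(i < r) a i x * b i y)) => [x|].
  by rewrite T_eq.
by apply: order_cone_sum => // i; case: (b_cone i).
Qed.

Lemma nd_decomp_colB T r y y' : nd_decomp T r -> (y <= y')%O ->
  order_cone (fun x => T x y' - T x y).
Proof.
move=> [a [b [a_cone [b_cone T_eq]]]] le_yy'.
apply: (@eq_order_cone _ _ _ (fun x => \sum_(i < r) a i x * (b i y' - b i y))).
  by move=> x; rewrite !T_eq -sumrB; apply: eq_bigr => i _; rewrite mulrBr.
by apply: order_cone_sum => // i; rewrite subr_ge0; case: (b_cone i) => _; apply.
Qed.

Lemma nd_decomp2 T (U V : P1 -> R) (al be : P2 -> R) :
  order_cone U -> order_cone V -> order_cone al -> order_cone be ->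
  (forall x y, T x y = U x * al y + V x * be y) -> nd_decomp T 2.
Proof.
move=> U_cone V_cone al_cone be_cone T_eq.
exists (fun i : 'I_2 => if i == 0 then U else V).
exists (fun i : 'I_2 => if i == 0 then al else be).
split; first by move=> i; case: ifP.
split; first by move=> i; case: ifP.
by move=> x y; rewrite sum_ord2 T_eq.
Qed.

Lemma mxrank_le_nd_decomp T r : nd_decomp T r -> (\rank (mx_of T) <= r)%N.
Proof.
move=> [a [b [_ [_ T_eq]]]].
pose A : 'M[R]_(#|P1|, r) := \matrix_(i, k) a k (enum_val i).
pose B : 'M[R]_(r, #|P2|) := \matrix_(k, j) b k (enum_val j).
have -> : mx_of T = A *m B.
  by apply/matrixP => i j; rewrite !mxE T_eq; apply: eq_bigr => k _; rewrite !mxE.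
exact: leq_trans (mxrankM_maxl _ _) (rank_leq_col _).
Qed.

Lemma mx_of_rank2_factor T : \rank (mx_of T) = 2%N ->
  exists a0 a1 b0 b1, [/\ free2 a0 a1, free2 b0 b1 &
    forall x y, T x y = comb2 a0 a1 (b0 y, b1 y) x].
Proof.
move=> rank2; have := mulmx_base (mx_of T).
have := col_base_full (mx_of T); have := row_base_free (mx_of T).
move: (col_base (mx_of T)) (row_base (mx_of T)); rewrite rank2 => A B freeB fullA AB.
exists (fun x => A^T 0 (enum_rank x)), (fun x => A^T 1 (enum_rank x)).
exists (fun y => B 0 (enum_rank y)), (fun y => B 1 (enum_rank y)).
split; [by apply: free2_row_free; rewrite /row_free mxrank_tr | exact: free2_row_free |].
move=> x y; move/matrixP: AB => /(_ (enum_rank x) (enum_rank y)).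
by rewrite !mxE sum_ord2 !enum_rankK /comb2 /= => <-; rewrite !mxE mulrC [_ * A _ 1]mulrC.
Qed.

End NdDecomp.

Section RankTwo.
Variables (R : realType) (d1 d2 : Order.disp_t).
Variables (P1 : finPOrderType d1) (P2 : finPOrderType d2).
Variables (a0 a1 : P1 -> R) (b0 b1 : P2 -> R) (T : P1 -> P2 -> R).
Hypotheses (free_a : free2 a0 a1) (free_b : free2 b0 b1).
Hypothesis T_eq : forall x y, T x y = comb2 a0 a1 (b0 y, b1 y) x.
Hypothesis col_cone : forall y, order_cone (T^~ y).
Hypothesis colB_cone :
  forall y y', (y <= y')%O -> order_cone (fun x => T x y' - T x y).

(* Coordinates of the columns of T and of their increments along P2; the
   index inr (y, y') with y and y' not in order is a junk zero vector. *)
Definition cone_gen (i : P2 + P2 * P2) : R * R :=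
  match i with
  | inl y => (b0 y, b1 y)
  | inr (y, y') => if (y <= y')%O then (b0 y', b1 y') - (b0 y, b1 y) else 0
  end.

Lemma order_cone_gen i : order_cone (comb2 a0 a1 (cone_gen i)).
Proof.
case: i => [y|[y y']] /=.
  by apply: eq_order_cone (col_cone y) => x; rewrite T_eq.
case: ifP => [le_yy'|_].
  by apply: eq_order_cone (colB_cone le_yy') => x; rewrite comb2B -!T_eq.
by split=> [x|x x' _]; rewrite /comb2 /= !mul0r addr0.
Qed.

Lemma exists_col_neq0 : exists y, cone_gen (inl y) != 0.
Proof.
have [y nzy|all0] := pickP (fun y => cone_gen (inl y) != 0); first by exists y.
suff /(congr1 fst)/eqP : (1, 0) = 0 :> R * R by rewrite oner_eq0.
apply: free_b => y; have /negbFE/eqP[b0y _] := all0 y.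
by rewrite /comb2 /= b0y mul1r mul0r addr0.
Qed.

Lemma nd_decomp_rank2 : nd_decomp T 2.
Proof.
have [y0 nz0] := exists_col_neq0.
have gen_pos i : cone_gen i != 0 -> 0 < dot (\sum_x a0 x, \sum_x a1 x) (cone_gen i).
  by move=> nzi; apply: free2_dot_sum_gt0 nzi => // x; case: (order_cone_gen i).
have [iu [iv [nzu v_cross u_cross uv_parallel]]] := extreme_rays nz0 gen_pos.
set u := cone_gen iu; set v := cone_gen iv; set D := cross v u.
have D_gt0 : 0 < D.
  rewrite lt_def u_cross andbT; apply: contra nzu => /eqP/uv_parallel parallel.
  (* all columns are then parallel to u, which would make b0, b1 dependent *)
  have perp0 : (- u.2, u.1) = 0.
    apply: free_b => y; transitivity (cross u (cone_gen (inl y))); last exact: parallel.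
    by rewrite /cross /comb2 /=; ring.
  have /= /eqP := congr1 fst perp0; rewrite oppr_eq0 => /eqP u2.
  have /= u1 := congr1 snd perp0.
  by rewrite -/u [u]surjective_pairing u1 u2.
pose al y := cross v (cone_gen (inl y)) / D.
pose be y := cross (cone_gen (inl y)) u / D.
apply: (nd_decomp2 (order_cone_gen iu) (order_cone_gen iv) (al := al) (be := be)).
- split=> [y|y y' le_yy']; first exact: divr_ge0 (v_cross _) (ltW D_gt0).
  rewrite -subr_ge0 -mulrBl -crossBr; have := v_cross (inr (y, y')).
  by rewrite /= le_yy' => ?; apply: divr_ge0 (ltW D_gt0).
- split=> [y|y y' le_yy']; first exact: divr_ge0 (u_cross _) (ltW D_gt0).
  rewrite -subr_ge0 -mulrBl -crossBl; have := u_cross (inr (y, y')).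
  by rewrite /= le_yy' => ?; apply: divr_ge0 (ltW D_gt0).
move=> x y; rewrite T_eq (comb2_cramer a0 a1 _ x (lt0r_neq0 D_gt0)).
by rewrite /al /be mulrC [X in _ + X]mulrC.
Qed.

End RankTwo.

Unset Implicit Arguments.
Theorem theorem12 (R : realType) (d1 d2 : Order.disp_t)
  (P1 : finPOrderType d1) (P2 : finPOrderType d2) (T : P1 -> P2 -> R) :
  in_Nfin T -> \rank (mx_of T) = 2%N -> nd_rank_eq T 2.
Proof.
move=> [r decT] rank2; split; last by move=> r' /mxrank_le_nd_decomp; rewrite rank2.
have [a0 [a1 [b0 [b1 [free_a free_b T_eq]]]]] := mx_of_rank2_factor rank2.
apply: (nd_decomp_rank2 free_a free_b T_eq).
  by move=> y; apply: nd_decomp_col decT.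
by move=> y y'; apply: nd_decomp_colB decT.
Qed.
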